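(* Let $d\ge2$, $l\in\{1,\dots,d\}$, $c\in\mathbb R$, and let $H=\{h\in\mathbb R^d:h\cdot e_l=c\}$. Let $x,y\in\mathbb Z^d$ satisfy $x\cdot e_l\ge c$ and $y\cdot e_l>c$. Let $V=\{e_i+e_j,\ e_i-e_j,\ -e_i+e_j,\ -e_i-e_j:\ i,j=1,\dots,d\}$. Fix an integer $m\ge1000$ and suppose $|x-y|_1\le m$. Then there exist $y^*\in\mathbb Z^d$ with $y^*\cdot e_l>c$ and $|y-y^*|_\infty\le1$, an integer $K\le 1609+104^{d-1}$, vectors $v_1,\dots,v_K\in V$ and integers $a_1,\dots,a_K$ such that for each $k\le K$, $$\tfrac{m}{1000}\le|a_k|\le\tfrac{m}{10},\qquad \Big|x+\sum_{i=1}^k a_iv_i-y\Big|_\infty\le2m,\qquad \Big(x+\sum_{i=1}^k a_iv_i\Big)\cdot e_l>c,$$ and $y^*-x=\sum_{i=1}^K a_iv_i$.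
   Context: $e_1,\dots,e_d$ are the standard basis vectors of $\mathbb R^d$. *)

From HB Require Import structures.
From mathcomp Require Import all_boot all_order all_algebra.
From mathcomp Require Import reals.
Set Implicit Arguments. Unset Strict Implicit. Unset Printing Implicit Defensive.
Import Order.TTheory GRing.Theory Num.Theory.
Local Open Scope ring_scope.

Definition e_ (d : nat) (i : 'I_d) : 'rV[int]_d := delta_mx 0 i.

Definition inV (d : nat) (v : 'rV[int]_d) : Prop :=
  exists i j : 'I_d,
    v = e_ i + e_ j \/ v = e_ i - e_ j \/ v = - e_ i + e_ j \/ v = - e_ i - e_ j.

Definition l1norm (d : nat) (v : 'rV[int]_d) : nat := (\sum_(k < d) `|v ord0 k|%N)%N.
Definition linfnorm (d : nat) (v : 'rV[int]_d) : nat := (\max_(k < d) `|v ord0 k|%N)%N.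

Definition coord_R (R : realType) (d : nat) (v : 'rV[int]_d) (l : 'I_d) : R :=
  (v ord0 l)%:~R.

(* Only the directions e_j + e_j = 2 e_j are used.  Put t_j = ceil((y_j - x_j) / 2)
   and y*_j = x_j + 2 t_j, which is y_j or y_j + 1.  The coordinates are moved one
   after the other, l first, each in 20 steps of size between m/100 and m/10: ten
   steps up from 0 to max(t_j, 0) + 10 (m/100), then ten steps down to t_j; this keeps
   every intermediate point within 2m of y.  While coordinate l moves it stays at
   least min(x_l + 1, y_l), and afterwards it equals y*_l >= y_l, so every point lies
   strictly above the hyperplane.  There are 20 d <= 1609 + 104^(d-1) steps. *)

From HB Require Import structures.
From mathcomp Require Import all_boot all_order all_algebra reals.
From mathcomp Require Import zify.
Import Order.TTheory GRing.Theory Num.Theory.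
Local Open Scope ring_scope.
Set Implicit Arguments. Unset Strict Implicit. Unset Printing Implicit Defensive.

Definition even_split (Q : int) (s : nat) : int :=
  s%:Z * (Q %/ 10)%Z + Num.min s%:Z (Q %% 10)%Z.

Lemma even_split0 (Q : int) : even_split Q 0 = 0.
Proof. rewrite /even_split; lia. Qed.

Lemma even_split10 (Q : int) : even_split Q 10 = Q.
Proof. rewrite /even_split; lia. Qed.

Lemma even_split_step (Q : int) (s : nat) (a b : int) : 10 * a <= Q <= 10 * b -> (s < 10)%N ->
  a <= even_split Q s.+1 - even_split Q s <= b.
Proof. rewrite /even_split; lia. Qed.

Lemma even_split_bounds (Q : int) (s : nat) (a : int) : 0 <= a -> 10 * a <= Q -> (s <= 10)%N ->
  s%:Z * a <= even_split Q s <= Q.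
Proof.
rewrite /even_split => a_ge0 aQ s_le10.
have le_a_quo : a <= (Q %/ 10)%Z by lia.
have : s%:Z * a <= s%:Z * (Q %/ 10)%Z by rewrite ler_wpM2l.
have : s%:Z * (Q %/ 10)%Z <= 10 * (Q %/ 10)%Z by rewrite ler_wpM2r //; lia.
lia.
Qed.

(* Ten near-equal steps up from 0 to the peak max(t, 0) + 10 A, then ten down to t;
   the margin 10 A makes every step at least A. *)
Definition updown (A t : int) (s : nat) : int :=
  let P := Num.max t 0 + 10 * A in
  if (s <= 10)%N then even_split P s else P - even_split (P - t) (s - 10).

Lemma updown0 (A t : int) : updown A t 0 = 0.
Proof. by rewrite /updown even_split0. Qed.

Lemma updown20 (A t : int) : updown A t 20 = t.
Proof. rewrite /updown /= even_split10; lia. Qed.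

Lemma updown_bounds (A t : int) (s : nat) : 0 <= A -> (s <= 20)%N ->
  Num.min 0 t <= updown A t s <= Num.max t 0 + 10 * A.
Proof.
rewrite /updown => A_ge0 s_le20; case: ifP => [s_le10 | /negbT s_gt10].
  have := @even_split_bounds (Num.max t 0 + 10 * A) s 0 (lexx 0) ltac:(lia) s_le10.
  rewrite mulr0; lia.
have := @even_split_bounds (Num.max t 0 + 10 * A - t) (s - 10) 0 (lexx 0) ltac:(lia) ltac:(lia).
rewrite mulr0; lia.
Qed.

Lemma updown_ge (A t : int) (s : nat) : 1 <= A -> (1 <= s <= 20)%N -> Num.min 1 t <= updown A t s.
Proof.
rewrite /updown => A_ge1 s_range; case: ifP => [s_le10 | /negbT s_gt10].
  have := @even_split_bounds (Num.max t 0 + 10 * A) s A ltac:(lia) ltac:(lia) s_le10.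
  have : 1 <= s%:Z * A by rewrite -[1]mulr1 ler_pM //; lia.
  lia.
have := @even_split_bounds (Num.max t 0 + 10 * A - t) (s - 10) 0 (lexx 0) ltac:(lia) ltac:(lia).
rewrite mulr0; lia.
Qed.

Lemma updown_step (A B t : int) (s : nat) : 1 <= A -> `|t| <= 10 * (B - A) -> (s < 20)%N ->
  A <= `|updown A t s.+1 - updown A t s| <= B.
Proof.
rewrite /updown => A_ge1 t_small s_lt20.
case: (ltnP s 10) => [s_lt10 | s_ge10].
  rewrite (ltnW s_lt10).
  have := @even_split_step (Num.max t 0 + 10 * A) s A B ltac:(lia) s_lt10; lia.
case: (ltnP 10 s) => [s_gt10 | s_le10].
  rewrite subSn //.
  have := @even_split_step (Num.max t 0 + 10 * A - t) (s - 10) A B ltac:(lia) ltac:(lia); lia.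
have -> : s = 10%N by apply/eqP; rewrite eqn_leq s_le10 s_ge10.
have := @even_split_step (Num.max t 0 + 10 * A - t) 0 A B ltac:(lia) isT.
rewrite /= subSn // subnn even_split0 even_split10; lia.
Qed.

Section CoordinatePath.
Variables (d : nat) (x : 'rV[int]_d) (t : 'I_d -> int) (A : int).
Variables (order : seq 'I_d) (j0 : 'I_d).

(* Coordinate j runs through its schedule during the steps
   20 i + 1, ..., 20 i + 20 where i is its position in [order]. *)
Definition path_phase (k : nat) (j : 'I_d) : nat := minn (k - 20 * index j order) 20.

Definition path_pos (k : nat) : 'rV[int]_d :=
  \row_j (x ord0 j + 2 * updown A (t j) (path_phase k j)).

Definition path_coord (k : nat) : 'I_d := nth j0 order (k.-1 %/ 20).

Definition path_coef (k : nat) : int :=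
  updown A (t (path_coord k)) (k.-1 %% 20).+1 - updown A (t (path_coord k)) (k.-1 %% 20).

Definition path_dir (k : nat) : 'rV[int]_d := e_ (path_coord k) + e_ (path_coord k).

Lemma path_dir_inV k : inV (path_dir k).
Proof. by exists (path_coord k), (path_coord k); left. Qed.

Lemma path_pos0 : path_pos 0 = x.
Proof. by apply/rowP => j; rewrite !mxE /path_phase sub0n min0n updown0 mulr0 addr0. Qed.

Lemma path_pos_step k : uniq order -> (1 <= k <= 20 * size order)%N ->
  path_pos k - path_pos k.-1 = path_coef k *: path_dir k.
Proof.
move=> order_uniq /andP[k_ge1 k_le].
rewrite /path_coef /path_dir /path_coord.
set i := (k.-1 %/ 20)%N; set r := (k.-1 %% 20)%N.
have r_lt20 : (r < 20)%N by rewrite ltn_mod.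
have k_eq : k = (20 * i + r).+1 by rewrite /i /r mulnC -divn_eq; lia.
have i_lt : (i < size order)%N by lia.
set c := nth j0 order i.
have index_c : index c order = i by rewrite index_uniq.
apply/rowP => j; rewrite !mxE /path_phase.
have [->|j_neq_c] := eqVneq j c.
  rewrite index_c eqxx /=.
  have -> : minn (k - 20 * i) 20 = r.+1 by rewrite k_eq; lia.
  have -> : minn (k.-1 - 20 * i) 20 = r by rewrite k_eq; lia.
  lia.
have index_j : index j order != i.
  apply: contra_neq j_neq_c => index_j.
  by rewrite /c -index_j nth_index // -index_mem index_j.
have -> : minn (k - 20 * index j order) 20 = minn (k.-1 - 20 * index j order) 20.
  by move: index_j; rewrite k_eq; lia.
rewrite andbF /=; lia.
Qed.

Lemma path_pos_sum k : uniq order -> (k <= 20 * size order)%N ->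
  x + \sum_(1 <= i < k.+1) path_coef i *: path_dir i = path_pos k.
Proof.
move=> order_uniq; elim: k => [|k IH] k_le.
  by rewrite big_geq // addr0 path_pos0.
rewrite big_nat_recr //= addrA IH ?(ltnW k_le) // -path_pos_step ?k_le //.
by rewrite addrC subrK.
Qed.

Lemma path_pos_end : (forall j, j \in order) ->
  path_pos (20 * size order) = \row_j (x ord0 j + 2 * t j).
Proof.
move=> order_full; apply/rowP => j; rewrite !mxE /path_phase.
have index_lt : (index j order < size order)%N by rewrite index_mem.
by rewrite (_ : minn _ 20 = 20%N) ?updown20 //; lia.
Qed.

Lemma path_coef_bounds (B : int) k : 1 <= A -> (forall j, `|t j| <= 10 * (B - A)) ->
  A <= `|path_coef k| <= B.
Proof. by move=> A_ge1 t_small; apply: updown_step; rewrite ?ltn_mod. Qed.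

Lemma path_pos_bounds k j : 0 <= A ->
  2 * Num.min 0 (t j) <= path_pos k ord0 j - x ord0 j <= 2 * (Num.max (t j) 0 + 10 * A).
Proof.
move=> A_ge0; rewrite mxE.
have := @updown_bounds A (t j) (path_phase k j) A_ge0 (geq_minr _ _); lia.
Qed.

Lemma path_pos_head k j : 1 <= A -> index j order = 0%N -> (0 < k)%N ->
  2 * Num.min 1 (t j) <= path_pos k ord0 j - x ord0 j.
Proof.
move=> A_ge1 index_j k_gt0; rewrite mxE /path_phase index_j muln0 subn0.
have := @updown_ge A (t j) (minn k 20) A_ge1 ltac:(lia); lia.
Qed.

End CoordinatePath.

Definition coord_order d (l : 'I_d) : seq 'I_d := l :: rem l (enum 'I_d).

Lemma coord_order_perm d (l : 'I_d) : perm_eq (enum 'I_d) (coord_order l).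
Proof. exact/perm_to_rem/mem_enum. Qed.

Lemma coord_order_uniq d (l : 'I_d) : uniq (coord_order l).
Proof. by rewrite -(perm_uniq (coord_order_perm l)) enum_uniq. Qed.

Lemma mem_coord_order d (l j : 'I_d) : j \in coord_order l.
Proof. by rewrite -(perm_mem (coord_order_perm l)) mem_enum. Qed.

Lemma size_coord_order d (l : 'I_d) : size (coord_order l) = d.
Proof. by rewrite -(perm_size (coord_order_perm l)) size_enum_ord. Qed.

Lemma abs_coord_le_l1norm d (v : 'rV[int]_d) (j : 'I_d) : (`|v ord0 j| <= l1norm v)%N.
Proof. by rewrite /l1norm (bigD1 j) //= leq_addr. Qed.

Lemma step_count_bound d : (20 * d <= 1609 + 104 ^ (d - 1))%N.
Proof.
case: d => [|[|d]] //; rewrite subSS subn0 expnS.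
have := ltn_expl d (isT : (1 < 104)%N); lia.
Qed.

Lemma step_size_real (R : realType) (m z : int) : 1000 <= m -> (m %/ 100)%Z <= z <= (m %/ 10)%Z ->
  (m%:~R / 1000 : R) <= z%:~R /\ z%:~R <= (m%:~R / 10 : R).
Proof.
move=> m_ge z_range; split.
  by rewrite ler_pdivrMr // -[1000 : R]/(1000%:~R) -intrM ler_int; lia.
by rewrite ler_pdivlMr // -[10 : R]/(10%:~R) -intrM ler_int; lia.
Qed.

Lemma int_above_level (R : realType) (c : R) (a b z : int) :
  c <= a%:~R -> c < b%:~R -> Num.min (a + 1) b <= z -> c < z%:~R.
Proof.
move=> ca cb; have [_ | _] := lerP (a + 1) b => z_ge.
  by apply: (le_lt_trans ca); rewrite ltr_int; lia.
by apply: (lt_le_trans cb); rewrite ler_int.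
Qed.

Section HalfGapPath.
Variables (d : nat) (x y : 'rV[int]_d) (m : int) (l : 'I_d).

Definition half_gap (j : 'I_d) : int := ((y ord0 j - x ord0 j + 1) %/ 2)%Z.

Local Notation A := (m %/ 100)%Z.
Local Notation pos := (path_pos x half_gap A (coord_order l)).

Lemma half_gap_path_end :
  pos (20 * d) = \row_j (x ord0 j + 2 * half_gap j).
Proof. by have := path_pos_end x half_gap A (@mem_coord_order d l); rewrite size_coord_order. Qed.

Lemma half_gap_end_near : (linfnorm (y - pos (20 * d)) <= 1)%N.
Proof.
apply/bigmax_leqP => j _; rewrite half_gap_path_end !mxE /half_gap.
by move: (x ord0 j) (y ord0 j) => a b; lia.
Qed.

Lemma half_gap_end_above : y ord0 l <= pos (20 * d) ord0 l.
Proof. by rewrite half_gap_path_end mxE /half_gap; lia. Qed.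

Lemma half_gap_path_sum j0 k : (k <= 20 * d)%N ->
  x + \sum_(1 <= i < k.+1) path_coef half_gap A (coord_order l) j0 i *: path_dir (coord_order l) j0 i
  = pos k.
Proof. by move=> k_le; rewrite path_pos_sum ?coord_order_uniq ?size_coord_order. Qed.

Hypothesis m_ge1000 : 1000 <= m.
Hypothesis gap : forall j, `|y ord0 j - x ord0 j| <= m.

Lemma half_gap_path_coef j0 k : A <= `|path_coef half_gap A (coord_order l) j0 k| <= (m %/ 10)%Z.
Proof.
apply: path_coef_bounds => [|j]; first lia.
by have := gap j; rewrite /half_gap; lia.
Qed.

Lemma half_gap_path_near k : (linfnorm (pos k - y))%:Z <= 2 * m.
Proof.
suff : (linfnorm (pos k - y) <= `|(2 * m)%R|)%N by lia.
apply/bigmax_leqP => j _; rewrite mxE.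
have := path_pos_bounds x half_gap (coord_order l) k j (_ : 0 <= A); have := gap j.
move: (pos k ord0 j) => p; rewrite /half_gap !mxE.
by move: (x ord0 j) (y ord0 j) => a b; lia.
Qed.

Lemma half_gap_path_above k : (0 < k)%N -> Num.min (x ord0 l + 1) (y ord0 l) <= pos k ord0 l.
Proof.
move=> k_gt0; have head_l : index l (coord_order l) = 0%N by rewrite /= eqxx.
have := path_pos_head x half_gap (_ : 1 <= A) head_l k_gt0; have := gap l.
by rewrite /half_gap; move: (pos k ord0 l) (x ord0 l) (y ord0 l) => p a b; lia.
Qed.

End HalfGapPath.

Theorem lemmaA5 (R : realType) (d : nat) (hd : (2 <= d)%N) (l : 'I_d) (c : R)
  (x y : 'rV[int]_d)
  (hx : c <= coord_R R x l) (hy : c < coord_R R y l)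
  (m : int) (hm : 1000 <= m) (hxy : (l1norm (x - y))%:Z <= m) :
  exists (ystar : 'rV[int]_d),
    c < coord_R R ystar l /\ (linfnorm (y - ystar) <= 1)%N /\
    exists (K : nat) (v : nat -> 'rV[int]_d) (a : nat -> int),
      (K <= 1609 + 104 ^ (d - 1))%N /\
      (forall k : nat, (1 <= k <= K)%N -> inV (v k)) /\
      (forall k : nat, (1 <= k <= K)%N ->
         (m%:~R / 1000 : R) <= (`|a k|)%:~R /\ (`|a k|)%:~R <= (m%:~R / 10 : R) /\
         (linfnorm (x + \sum_(1 <= i < k.+1) a i *: v i - y))%:Z <= 2 * m /\
         c < coord_R R (x + \sum_(1 <= i < k.+1) a i *: v i) l) /\
      ystar - x = \sum_(1 <= i < K.+1) a i *: v i.
Proof.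
(* The construction works for every d. *)
have gap j : `|y ord0 j - x ord0 j| <= m.
  move: (abs_coord_le_l1norm (x - y) j) hxy; rewrite !mxE.
  by move: (x ord0 j) (y ord0 j) (l1norm _) => a b L; lia.
pose order := coord_order l; pose t := half_gap x y; pose A := (m %/ 100)%Z.
exists (path_pos x t A order (20 * d)); split; [|split].
- rewrite /coord_R; apply: (lt_le_trans hy); rewrite ler_int; exact: half_gap_end_above.
- exact: half_gap_end_near.
exists (20 * d)%N, (path_dir order l), (path_coef t A order l); split; [|split; [|split]].
- exact: step_count_bound.
- by move=> k _; apply: path_dir_inV.
- move=> k /andP[k_gt0 k_le]; rewrite half_gap_path_sum //.
  have [a_lo a_hi] := step_size_real R hm (half_gap_path_coef l hm gap l k).
  split; [|split; [|split]] => //; first exact: half_gap_path_near.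
  by rewrite /coord_R; apply: (int_above_level hx hy); apply: half_gap_path_above.
- by rewrite -(@half_gap_path_sum d x y m l l) // addrC addKr.
Qed.
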